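(* Let $\Gamma$ be a Shilla distance-regular graph with $b(\Gamma)=b$. Then: (i) $c_2$ divides $(b-1)a_3b_2$; (ii) $c_2$ divides $(b-1)ba_3(a_3+1)$; (iii) $c_2$ divides $b(a_3+1)b_2$; (iv) $c_2$ divides $(b+a_3)b_2$, and $(b+a_3)b_2\geq (1+a_3)c_2$, with equality if and only if $p^3_{33}=0$; (v) $c_2$ divides $(b-1)bb_2$.
   Context: A connected graph $\Gamma$ of diameter $D$ is distance-regular if there are integers $b_i,c_i$ ($0\le i\le D$) such that for any two vertices $x,y$ at distance $i$, exactly $c_i$ neighbours of $y$ are at distance $i-1$ from $x$ and exactly $b_i$ neighbours of $y$ are at distance $i+1$ from $x$. Then $\Gamma$ is regular of valency $k=b_0$, and $a_i:=k-b_i-c_i$. For vertices $x,y$ at distance $i$, $p^i_{jl}$ denotes the number of vertices $z$ with $d(x,z)=j$ and $d(y,z)=l$ (independent of the choice of $x,y$). The eigenvalues of $\Gamma$ are those of its adjacency matrix; $\Gamma$ has exactly $D+1$ distinct eigenvalues $k=\theta_0>\theta_1>\dots>\theta_D$. A Shilla distance-regular graph is a distance-regular graph of diameter $3$ whose second largest eigenvalue satisfies $\theta_1=a_3$. For such graphs $k=(a_3-a_1)a_3$, and one defines $b(\Gamma):=a_3-a_1=k/a_3$. *)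

From mathcomp Require Import all_boot all_order all_algebra all_field.
Set Implicit Arguments. Unset Strict Implicit. Unset Printing Implicit Defensive.
Import Order.TTheory GRing.Theory Num.Theory.

Definition simple_graph n (e : rel 'I_n) :=
  symmetric e /\ irreflexive e.

Fixpoint nbhd_within n (e : rel 'I_n) (x : 'I_n) (i : nat) : {set 'I_n} :=
  match i with
  | 0 => [set x]
  | i'.+1 => let S := nbhd_within e x i' in
             S :|: [set y | [exists z in S, e z y]]
  end.

(* graph distance: least i with y within i steps of x
   (returns n when y is unreachable; never happens in connected graphs) *)
Definition dist n (e : rel 'I_n) (x y : 'I_n) : nat :=
  find (fun i => y \in nbhd_within e x i) (iota 0 n).

Definition connected n (e : rel 'I_n) :=
  forall x y : 'I_n, exists i, y \in nbhd_within e x i.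

Definition has_diameter n (e : rel 'I_n) (D : nat) :=
  (forall x y, dist e x y <= D) /\ (exists x y, dist e x y = D).

Definition distance_regular n (e : rel 'I_n) (D : nat) (b c : nat -> nat) :=
  [/\ simple_graph e, connected e, has_diameter e D &
    forall i, i <= D -> forall x y, dist e x y = i ->
      #|[set z | e y z & dist e x z == i.-1]| = c i /\
      #|[set z | e y z & dist e x z == i.+1]| = b i].

Definition valency (b : nat -> nat) := b 0.
Definition a_num (b c : nat -> nat) (i : nat) := (b 0 - b i - c i)%N.

(* p^i_{jl} evaluated at the pair (x,y) *)
Definition pnum n (e : rel 'I_n) (x y : 'I_n) (j l : nat) :=
  #|[set z | (dist e x z == j) && (dist e y z == l)]|.

Definition adjmx n (e : rel 'I_n) : 'M[algC]_n :=
  \matrix_(i, j) ((e i j)%:R)%R.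

Local Open Scope ring_scope.

Definition second_largest_eigenvalue n (M : 'M[algC]_n) (t : algC) :=
  exists t0, [/\ eigenvalue M t0, eigenvalue M t, t < t0,
    (forall s, eigenvalue M s -> s <= t0) &
    (forall s, eigenvalue M s -> s != t0 -> s <= t)].

Definition shilla n (e : rel 'I_n) (b c : nat -> nat) :=
  distance_regular e 3 b c /\
  second_largest_eigenvalue (adjmx e) (a_num b c 3%N)%:R.

Definition bGamma (b c : nat -> nat) : int :=
  (a_num b c 3)%:Z - (a_num b c 1)%:Z.

From mathcomp Require Import all_boot all_order all_algebra all_field zify ring.
Set Implicit Arguments. Unset Strict Implicit. Unset Printing Implicit Defensive.
Import Order.TTheory GRing.Theory Num.Theory.

(* Counting in two ways the edges between the spheres around two vertices x and y shows that
   the numbers p_h(i, l) = #{z | d(x,z) = i, d(y,z) = l}, for d(x,y) = h, commute with the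
   tridiagonal intersection matrix L:  sum_l p_h(i,l) L(l,j) = sum_l p_h(l,j) L(l,i).
   For h = 3 and h = 0 this gives linear relations between p_3(2,2), p_3(2,3), p_3(3,3),
   p_0(2,2) and the b_i, c_i.  Summing an eigenvector for a_3 over the spheres around a
   vertex where it does not vanish gives sums obeying the recurrence L; its last row kills
   the sum over the 2-sphere, and its first two rows then give a_3^2 = k + a_1 a_3, that is
   k = a_3 b.  Substituting, c_2 p_3(2,3) = (b-1) a_3 b_2,
   c_2 p_3(3,3) + (1 + a_3) c_2 = (b + a_3) b_2 and c_2 p_0(2,2) = k b_1 = (b-1) b a_3 (a_3+1),
   from which the five divisibilities and the inequality follow. *)

Lemma card_set_sumb (T : finType) (P : pred T) : #|[set x | P x]| = \sum_x P x.
Proof. by rewrite -sum1dep_card big_mkcond; apply: eq_bigr => x _; case: (P x). Qed.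

Definition sphere_sum n (e : rel 'I_n) (v : 'rV[algC]_n) x i :=
  (\sum_(z | dist e x z == i) v 0 z)%R.

Definition nbrs_at n (e : rel 'I_n) (u v : 'I_n) j := #|[set w | e v w & dist e u w == j]|.

(* [intersection_entry b c l j] is the entry L(l, j) of the intersection matrix: a vertex
   at distance l from x has that many neighbours at distance j from x. *)
Definition intersection_entry (b c : nat -> nat) l j :=
  if j == l.+1 then b l else if j == l then a_num b c l
  else if j == l.-1 then c l else 0.

Lemma intersection_entry_succ b c l : intersection_entry b c l l.+1 = b l.
Proof. by rewrite /intersection_entry eqxx. Qed.

Lemma intersection_entry_pred b c l : intersection_entry b c l.+1 l = c l.+1.
Proof. by rewrite /intersection_entry ltn_eqF // ltn_eqF //= eqxx. Qed.

Lemma pnum_xx_sym n (e : rel 'I_n) x i l : pnum e x x i l = pnum e x x l i.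
Proof. by apply: eq_card => z; rewrite !inE andbC. Qed.

Lemma pnum_diag n (e : rel 'I_n) x i l : i != l -> pnum e x x i l = 0.
Proof.
move=> ne_il; apply/eqP; rewrite cards_eq0; apply/eqP/setP => z; rewrite !inE.
by apply/andP => -[/eqP -> /eqP eil]; rewrite eil eqxx in ne_il.
Qed.

Section Distance.
Variables (n : nat) (e : rel 'I_n).
Implicit Types (x y z : 'I_n) (i j : nat).

Local Notation S := (nbhd_within e).

Lemma nbhd_withinS x i y :
  (y \in S x i.+1) = (y \in S x i) || [exists z in S x i, e z y].
Proof. by rewrite /= in_setU in_set. Qed.

Lemma nbhd_within_mono x i j : i <= j -> S x i \subset S x j.
Proof.
move=> /subnK <-; elim: (j - i) => [|k IHk] //=.
exact: subset_trans IHk (subsetUl _ _).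
Qed.

Lemma nbhd_within_adj x i y z : y \in S x i -> e y z -> z \in S x i.+1.
Proof.
by move=> Sy eyz; rewrite nbhd_withinS; apply/orP; right; apply/existsP; exists y; rewrite Sy.
Qed.

Lemma nbhd_within_grows x i :
  (exists2 j, j < i & S x j.+1 = S x j) \/ i < #|S x i|.
Proof.
elim: i => [|i [[j lt_ji fixj]|lt_i]]; first by right; rewrite /= cards1.
  by left; exists j => //; apply: ltnW.
have [fixi|growi] := eqVneq (S x i.+1) (S x i); first by left; exists i.
right; apply: leq_ltn_trans lt_i (proper_card _).
by rewrite properEneq eq_sym growi nbhd_within_mono.
Qed.

(* The balls grow strictly until they stabilise, which must happen within n steps. *)
Lemma nbhd_within_bounded x i : S x i \subset S x n.-1.
Proof.
have [[j lt_jn fixj]|] := nbhd_within_grows x n; last first.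
  by move=> lt_n; have := max_card (mem (S x n)); rewrite card_ord leqNgt lt_n.
have fixm m : j <= m -> S x m = S x j.
  by move=> /subnK <-; elim: (m - j) => [|k IHk] //; rewrite addSn -[RHS]fixj /= IHk.
have le_jn : j <= n.-1 by rewrite -ltnS prednK // (leq_ltn_trans _ lt_jn).
rewrite (fixm _ le_jn); have [le_ij|lt_ji] := leqP i j.
  exact: nbhd_within_mono.
by rewrite fixm ?(ltnW lt_ji).
Qed.

Lemma nbhd_within_pre x w i y : y \in S x i -> e w x -> y \in S w i.+1.
Proof.
elim: i y => [y /set1P -> ewx|i IHi y]; first by apply: nbhd_within_adj ewx; rewrite inE.
rewrite nbhd_withinS => /orP [Sy|/existsP [z /andP [Sz ezy]]] ewx.
  exact: subsetP (nbhd_within_mono _ (leqnSn _)) _ (IHi _ Sy ewx).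
exact: nbhd_within_adj (IHi _ Sz ewx) ezy.
Qed.

Hypothesis e_conn : connected e.

Lemma leq_dist x y i : (dist e x y <= i) = (y \in S x i).
Proof.
have [i0 Sy0] := e_conn x y.
have n_gt0 : 0 < n by apply: leq_ltn_trans (ltn_ord x).
have has_y : has (fun i => y \in S x i) (iota 0 n).
  apply/hasP; exists n.-1; first by rewrite mem_iota add0n prednK // leqnn andbT.
  exact: subsetP (nbhd_within_bounded _ _) _ Sy0.
have lt_dn : dist e x y < n by move: has_y; rewrite has_find size_iota.
apply/idP/idP => [le_di|Syi].
  apply: (subsetP (nbhd_within_mono x le_di)).
  by move: (nth_find 0 has_y); rewrite nth_iota.
rewrite leqNgt; apply/negP => lt_id.
by move: (before_find 0 lt_id); rewrite nth_iota ?add0n ?Syi // (ltn_trans lt_id).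
Qed.

Lemma dist_eq0 x y : (dist e x y == 0) = (y == x).
Proof. by rewrite -leqn0 leq_dist inE. Qed.

Lemma dist_xx x : dist e x x = 0.
Proof. by apply/eqP; rewrite dist_eq0. Qed.

Lemma dist_adj x y z : e y z -> dist e x z <= (dist e x y).+1.
Proof. by move=> eyz; rewrite leq_dist (nbhd_within_adj _ eyz) // -leq_dist. Qed.

Lemma dist_predS x y d : dist e x y = d.+1 -> exists2 z, e z y & dist e x z = d.
Proof.
move=> dxy; have : y \in S x d.+1 by rewrite -leq_dist dxy.
rewrite nbhd_withinS -leq_dist dxy ltnn => /existsP [z /andP [Sz ezy]].
exists z => //; apply/eqP; rewrite eqn_leq leq_dist Sz -ltnS -dxy.
exact: dist_adj.
Qed.

Lemma pnum0l x y l : pnum e x y 0 l = (dist e y x == l).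
Proof.
rewrite /pnum; case: eqP => [dyx|ndyx]; last first.
  apply/eqP; rewrite cards_eq0; apply/eqP/setP => z; rewrite !inE dist_eq0.
  by apply/andP => -[/eqP -> /eqP].
rewrite /= -(cards1 x); apply: eq_card => z; rewrite !inE dist_eq0; case: eqP => [->|] //=.
by rewrite dyx eqxx.
Qed.

Lemma sphere_sum0 (v : 'rV[algC]_n) x : sphere_sum e v x 0 = (v 0 x)%R.
Proof. by rewrite /sphere_sum (big_pred1 x) // => z; rewrite dist_eq0. Qed.

Lemma exists_at_dist x y i : i <= dist e x y -> exists z, dist e x z = i.
Proof.
move=> /subnK; move: (dist e x y - i) => k; elim: k y => [|k IHk] y dxy.
  by exists y.
have [z _ dxz] := dist_predS (esym dxy); exact: IHk z (esym dxz).
Qed.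

Hypothesis e_sym : symmetric e.

Lemma nbhd_within_sym x y i : y \in S x i -> x \in S y i.
Proof.
elim: i x y => [x y|i IHi x y]; first by rewrite /= !inE eq_sym.
rewrite nbhd_withinS => /orP [Sy|/existsP [z /andP [Sz ezy]]].
  exact: subsetP (nbhd_within_mono _ (leqnSn _)) _ (IHi _ _ Sy).
by apply: nbhd_within_pre (IHi _ _ Sz) _; rewrite e_sym.
Qed.

Lemma dist_sym x y : dist e x y = dist e y x.
Proof.
by apply/eqP; rewrite eqn_leq !leq_dist; apply/andP; split;
  apply: nbhd_within_sym; rewrite -leq_dist.
Qed.

Lemma dist_adj_sym x y z : e y z -> dist e x y <= (dist e x z).+1.
Proof. by rewrite e_sym; apply: dist_adj. Qed.

End Distance.

Section DistanceRegular.
Variables (n : nat) (e : rel 'I_n) (D : nat) (b c : nat -> nat).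
Hypothesis e_drg : distance_regular e D b c.
Implicit Types (x y z u v w : 'I_n) (i j l : nat).

Let e_sym : symmetric e. Proof. by case: e_drg => -[]. Qed.
Let e_irr : irreflexive e. Proof. by case: e_drg => -[]. Qed.
Let e_conn : connected e. Proof. by case: e_drg. Qed.
Let dist_leD x y : dist e x y <= D. Proof. by case: e_drg => _ _ []. Qed.
Let drg_counts i x y : i <= D -> dist e x y = i ->
  nbrs_at e x y i.-1 = c i /\ nbrs_at e x y i.+1 = b i.
Proof. by case: e_drg => _ _ _ counts /counts; apply. Qed.

Lemma dist_eq1 v w : (dist e v w == 1) = e v w.
Proof.
apply/idP/idP => [/eqP /(dist_predS e_conn) [z ezw /eqP]|evw].
  by rewrite dist_eq0 // => /eqP <-.
rewrite eqn_leq -{1}(dist_xx e_conn v) (dist_adj e_conn) //= lt0n dist_eq0 //.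
by apply: contraTneq evw => ->; rewrite e_irr.
Qed.

Lemma drg_valency v : #|[set w | e v w]| = b 0.
Proof.
have [_ <-] := drg_counts (leq0n D) (dist_xx e_conn v).
by apply: eq_card => w; rewrite !inE dist_eq1 andbb.
Qed.

Lemma nbrs_at_out u v j : j != (dist e u v).-1 -> j != dist e u v ->
  j != (dist e u v).+1 -> nbrs_at e u v j = 0.
Proof.
move=> /eqP ne_pred /eqP ne_d /eqP ne_succ; apply/eqP; rewrite cards_eq0.
apply/eqP/setP => w; rewrite !inE; apply/andP => -[evw /eqP dw].
have := dist_adj e_conn u evw; have := dist_adj_sym e_conn e_sym u evw; lia.
Qed.

Lemma nbrs_at_split u v : 0 < dist e u v ->
  nbrs_at e u v (dist e u v).-1 + nbrs_at e u v (dist e u v) +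
  nbrs_at e u v (dist e u v).+1 = b 0.
Proof.
move=> d_gt0; rewrite -(drg_valency v) /nbrs_at !card_set_sumb -!big_split /=.
apply: eq_bigr => w _; case evw: (e v w) => //=.
have := dist_adj e_conn u evw; have := dist_adj_sym e_conn e_sym u evw.
by move: d_gt0; do 3 case: eqP; lia.
Qed.

Lemma nbrs_atE u v j : nbrs_at e u v j = intersection_entry b c (dist e u v) j.
Proof.
have [c_d b_d] := drg_counts (dist_leD u v) erefl.
rewrite /intersection_entry; case: eqP => [->//|ne_succ].
case: eqP => [->|ne_d]; last first.
  case: eqP => [->//|ne_pred].
  by apply: nbrs_at_out; apply/eqP.
have [d0|d_gt0] := posnP (dist e u v).
  rewrite d0 /a_num subnn sub0n; move/eqP: d0; rewrite dist_eq0 // => /eqP <-.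
  apply/eqP; rewrite cards_eq0; apply/eqP/setP => w; rewrite !inE dist_eq0 //.
  by apply/andP => -[evw /eqP wv]; rewrite wv e_irr in evw.
have := nbrs_at_split d_gt0; rewrite c_d b_d /a_num; lia.
Qed.

Lemma drg_exists_dist i : i <= D -> exists x y, dist e x y = i.
Proof.
case: e_drg => _ _ [_ [x [y dxy]]] _ le_iD.
have /(exists_at_dist e_conn) [z dxz] : i <= dist e x y by rewrite dxy.
by exists x, z.
Qed.

Lemma drg_c1 : 0 < D -> c 1 = 1.
Proof.
move=> D_gt0; have [x [y dxy]] := drg_exists_dist D_gt0.
have [<- _] := drg_counts D_gt0 dxy.
rewrite -[RHS](cards1 x); apply: eq_card => w.
rewrite !inE dist_eq0 //; case: eqP => [->|] /=; last by rewrite andbF.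
by rewrite e_sym -dist_eq1 dxy.
Qed.

Lemma drg_bD : b D = 0.
Proof.
have [x [y dxy]] := drg_exists_dist (leqnn D).
have [_ <-] := drg_counts (leqnn D) dxy.
apply/eqP; rewrite cards_eq0; apply/eqP/setP => w; rewrite !inE.
by apply/andP => -[_ /eqP dxw]; have := dist_leD x w; rewrite dxw ltnn.
Qed.

Lemma drg_c_gt0 i : 0 < i <= D -> 0 < c i.
Proof.
case: i => // i /= le_iD; have [x [y dxy]] := drg_exists_dist le_iD.
have [z ezy dxz] := dist_predS e_conn dxy.
have [<- _] := drg_counts le_iD dxy.
by rewrite card_gt0; apply/set0Pn; exists z; rewrite !inE e_sym ezy dxz /=.
Qed.

Lemma drg_b_gt0 i : i < D -> 0 < b i.
Proof.
move=> lt_iD; have [x [z dxz]] := drg_exists_dist lt_iD.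
have [y eyz dxy] := dist_predS e_conn dxz.
have [_ <-] := drg_counts (ltnW lt_iD) dxy.
by rewrite card_gt0; apply/set0Pn; exists z; rewrite !inE eyz dxz /=.
Qed.

Lemma drg_row_sum i : 0 < i <= D -> c i + a_num b c i + b i = b 0.
Proof.
case/andP=> i_gt0 le_iD; have [x [y dxy]] := drg_exists_dist le_iD.
have [c_i b_i] := drg_counts le_iD dxy.
by have := nbrs_at_split (u := x) (v := y); rewrite dxy c_i b_i /a_num => /(_ i_gt0); lia.
Qed.

Lemma sum_nbrs_at_comm x y i j :
  \sum_z (dist e x z == i) * nbrs_at e y z j = \sum_z (dist e y z == j) * nbrs_at e x z i.
Proof.
under eq_bigr do rewrite /nbrs_at card_set_sumb big_distrr.
under [RHS]eq_bigr do rewrite /nbrs_at card_set_sumb big_distrr.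
rewrite [RHS]exchange_big; apply: eq_bigr => z _; apply: eq_bigr => w _ /=.
by rewrite e_sym; case: (e w z); case: (dist e x z == i); case: (dist e y w == j).
Qed.

Lemma sum_by_dist (R : nmodType) u (F : 'I_n -> nat -> R) :
  (\sum_z F z (dist e u z) = \sum_(l < D.+1) \sum_(z | dist e u z == l) F z l)%R.
Proof.
under [RHS]eq_bigr do rewrite big_mkcond.
rewrite exchange_big; apply: eq_bigr => z _ /=.
pose d : 'I_D.+1 := Ordinal (dist_leD u z : dist e u z < D.+1).
rewrite (bigD1 d) //= eqxx big1 ?addr0 // => l ne_ld.
by case: eqP => // dl; case/eqP: ne_ld; apply: val_inj.
Qed.

Lemma pnum_intersection_comm x y i j :
  \sum_(l < D.+1) pnum e x y i l * intersection_entry b c l j =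
  \sum_(l < D.+1) pnum e x y l j * intersection_entry b c l i.
Proof.
have expand u v i' j' : \sum_z (dist e u z == i') * nbrs_at e v z j' =
    \sum_(l < D.+1) pnum e u v i' l * intersection_entry b c l j'.
  under eq_bigr do rewrite nbrs_atE.
  rewrite (sum_by_dist v (fun z l => (dist e u z == i') * intersection_entry b c l j')).
  apply: eq_bigr => l _; rewrite -big_distrl /= /pnum card_set_sumb big_mkcond /=.
  by congr (_ * _); apply: eq_bigr => z _; case: (dist e v z == l); rewrite ?andbF ?andbT.
rewrite -expand sum_nbrs_at_comm expand; apply: eq_bigr => l _.
by rewrite /pnum; congr (_ * _); apply: eq_card => z; rewrite !inE andbC.
Qed.

Lemma pnum_xx_dist1 x : pnum e x x 1 1 = b 0.
Proof. by rewrite -(drg_valency x); apply: eq_card => z; rewrite !inE andbb dist_eq1. Qed.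

Lemma sum_pnum_xx x j (F : nat -> nat) : j <= D ->
  \sum_(l < D.+1) pnum e x x j l * F l = pnum e x x j j * F j.
Proof.
move=> le_jD; rewrite (bigD1 (Ordinal (le_jD : j < D.+1))) //= big1 ?addn0 // => l ne_lj.
rewrite pnum_diag ?mul0n // eq_sym; apply: contra ne_lj => /eqP lj.
by apply/eqP/val_inj.
Qed.

Lemma sphere_card_rec x i : i < D ->
  pnum e x x i i * b i = pnum e x x i.+1 i.+1 * c i.+1.
Proof.
move=> lt_iD.
transitivity (\sum_(l < D.+1) pnum e x x i l * intersection_entry b c l i.+1).
  by rewrite (sum_pnum_xx _ (intersection_entry b c ^~ i.+1)) ?intersection_entry_succ // ltnW.
rewrite pnum_intersection_comm; under eq_bigr do rewrite pnum_xx_sym.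
by rewrite (sum_pnum_xx _ (intersection_entry b c ^~ i)) // intersection_entry_pred.
Qed.

Local Open Scope ring_scope.

Lemma sphere_sum_eigen (v : 'rV[algC]_n) (th : algC) x i :
  v *m adjmx e = th *: v ->
  th * sphere_sum e v x i =
   \sum_(l < D.+1) (intersection_entry b c l i)%:R * sphere_sum e v x l.
Proof.
move=> eig_v; have eig_vz z : th * v 0 z = \sum_w v 0 w * (e w z)%:R.
  have := congr1 (fun M : 'rV_n => M 0 z) eig_v; rewrite !mxE => <-.
  by apply: eq_bigr => w _; rewrite mxE.
rewrite /sphere_sum mulr_sumr; under eq_bigr do rewrite eig_vz.
rewrite (exchange_big_dep xpredT) //=.
transitivity (\sum_w v 0 w * (intersection_entry b c (dist e x w) i)%:R).
  apply: eq_bigr => w _; rewrite -nbrs_atE /nbrs_at card_set_sumb natr_sum mulr_sumr big_mkcond.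
  apply: eq_bigr => z _; rewrite andbT.
  by case: (dist e x z == i); case: (e w z); rewrite ?mulr0 ?mulr1.
rewrite (sum_by_dist x (fun w l => v 0 w * (intersection_entry b c l i)%:R)).
by apply: eq_bigr => l _; rewrite mulr_sumr; apply: eq_bigr => w _; rewrite mulrC.
Qed.

End DistanceRegular.

Section DiameterThree.
Variables (n : nat) (e : rel 'I_n) (b c : nat -> nat).
Hypothesis e_drg : distance_regular e 3 b c.
Implicit Types (x y : 'I_n).

Let e_conn : connected e. Proof. by case: e_drg. Qed.
Let e_sym : symmetric e. Proof. by case: e_drg => -[]. Qed.
Let c1 : c 1 = 1. Proof. exact: drg_c1 e_drg isT. Qed.
Let a0 : a_num b c 0 = 0. Proof. by rewrite /a_num subnn sub0n. Qed.

Lemma dist3_pnum_equations x y : dist e x y = 3 ->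
  [/\ c 3 * a_num b c 2 + a_num b c 3 * c 3 = c 3 * a_num b c 1 + c 2 * pnum e x y 2 2,
      c 3 * b 2 + a_num b c 3 * a_num b c 3 =
        b 0 + a_num b c 3 * a_num b c 1 + c 2 * pnum e x y 2 3 &
      pnum e x y 2 2 * b 2 + pnum e x y 2 3 * a_num b c 3 =
        a_num b c 3 * b 1 + pnum e x y 2 3 * a_num b c 2 + pnum e x y 3 3 * c 3].
Proof.
move=> dxy; have comm i j := pnum_intersection_comm e_drg x y i j.
have p0 l : pnum e x y 0 l = (3 == l) by rewrite pnum0l // dist_sym // dxy.
have p1 l : l < 4 -> pnum e x y 1 l = intersection_entry b c 3 l.
  have := comm 0 l; rewrite !big_ord_recr !big_ord0 /= !p0 /intersection_entry /= a0 c1.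
  by case: l => [|[|[|[|l]]]] //=; lia.
have := comm 1 2; have := comm 1 3; have := comm 2 3.
rewrite !big_ord_recr !big_ord0 /= !p0 !p1 // /intersection_entry /=; split; lia.
Qed.

Local Open Scope ring_scope.

Lemma eigenvalue_a3 : eigenvalue (adjmx e) (a_num b c 3)%:R ->
  (a_num b c 3 * a_num b c 3 = b 0 + a_num b c 1 * a_num b c 3)%N.
Proof.
case/eigenvalueP=> v eig_v v_neq0.
have [x vx_neq0] : exists x, v 0 x != 0.
  apply/existsP; apply: contraNT v_neq0; rewrite negb_exists => /forallP v0.
  by apply/eqP/rowP => z; rewrite mxE; apply/eqP/negbNE/v0.
have sphere i := sphere_sum_eigen e_drg x i eig_v.
have := sphere 0; have := sphere 1; have := sphere 3.
rewrite !big_ord_recr !big_ord0 /= /intersection_entry /= a0 c1 sphere_sum0 //.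
set th : algC := (a_num b c 3)%:R.
set s1 := sphere_sum e v x 1; set s2 := sphere_sum e v x 2; set s3 := sphere_sum e v x 3.
rewrite !mul0r !add0r !addr0 mul1r => e3 e1 e0.
have s2_0 : s2 = 0.
  have /addIr/eqP : (b 2)%:R * s2 + th * s3 = 0 + th * s3 by rewrite add0r -e3.
  by rewrite mulf_eq0 pnatr_eq0 eqn0Ngt (drg_b_gt0 e_drg) // => /eqP.
have : (th * th - (b 0)%:R - (a_num b c 1)%:R * th) * v 0 x = 0.
  by rewrite !mulrBl -mulrA e0 e1 s2_0 -e0; ring.
move/eqP; rewrite mulf_eq0 (negbTE vx_neq0) orbF subr_eq0 subr_eq => /eqP eq_th.
by apply/eqP; rewrite -(eqr_nat algC) natrD !natrM -/th eq_th addrC.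
Qed.

End DiameterThree.

Local Open Scope ring_scope.

Lemma p33_elimination (R : idomainType) (a1 a2 a3 b1 b2 c2 c3 p22 p23 p33 : R) :
  c3 != 0 ->
  c3 * a2 + a3 * c3 = c3 * a1 + c2 * p22 ->
  p22 * b2 + p23 * a3 = a3 * b1 + p23 * a2 + p33 * c3 ->
  c2 * p23 = c3 * b2 -> a3 * b1 = c3 * (1 + a3) ->
  c2 * p33 + (1 + a3) * c2 = (a3 - a1 + a3) * b2.
Proof.
move=> c3_neq0 eq12 eq23 c2p23 a3b1; apply: (mulfI c3_neq0).
have c2p22 : c2 * p22 = c3 * (a2 + a3 - a1) by apply: (addrI (c3 * a1)); rewrite -eq12; ring.
have p33c3 : p33 * c3 = p22 * b2 + p23 * a3 - a3 * b1 - p23 * a2 by rewrite eq23; ring.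
transitivity (b2 * (c2 * p22) + (a3 - a2) * (c2 * p23) + c2 * (c3 * (1 + a3) - a3 * b1)).
  have -> : c3 * (c2 * p33 + (1 + a3) * c2) = c2 * (p33 * c3) + c3 * ((1 + a3) * c2) by ring.
  by rewrite p33c3; ring.
by rewrite c2p22 c2p23 a3b1; ring.
Qed.

Section Shilla.
Variables (n : nat) (e : rel 'I_n) (b c : nat -> nat).
Hypothesis e_shilla : shilla e b c.
Implicit Types (x y : 'I_n).

Let e_drg : distance_regular e 3 b c. Proof. by case: e_shilla. Qed.

Let row_sum i : (0 < i <= 3)%N ->
  (c i)%:Z + (a_num b c i)%:Z + (b i)%:Z = (b 0)%:Z.
Proof. by move=> /(drg_row_sum e_drg) /(congr1 Posz); rewrite !PoszD. Qed.

Lemma shilla_valency : (b 0)%:Z = (a_num b c 3)%:Z * bGamma b c.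
Proof.
have [_ [t0 [_ eig_a3 _ _ _]]] := e_shilla.
move/(congr1 Posz): (eigenvalue_a3 e_drg eig_a3); rewrite PoszD !PoszM => eq_a3.
by rewrite /bGamma mulrBr eq_a3; ring.
Qed.

Lemma shilla_b1 : (b 1)%:Z = (bGamma b c - 1) * ((a_num b c 3)%:Z + 1).
Proof.
apply: (addrI ((c 1)%:Z + (a_num b c 1)%:Z)); rewrite row_sum //.
by rewrite (drg_c1 e_drg) // shilla_valency /bGamma; ring.
Qed.

Lemma shilla_c3 : (c 3)%:Z = (a_num b c 3)%:Z * (bGamma b c - 1).
Proof.
have := row_sum (isT : (0 < 3 <= 3)%N); rewrite (drg_bD e_drg) addr0 shilla_valency => row3.
by rewrite mulrBr mulr1 -row3 addrK.
Qed.

Lemma shilla_p23 x y : dist e x y = 3%N ->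
  (c 2)%:Z * (pnum e x y 2 3)%:Z = (c 3)%:Z * (b 2)%:Z.
Proof.
case/(dist3_pnum_equations e_drg) => _ /(congr1 Posz) + _; rewrite !PoszD !PoszM.
have := shilla_valency; rewrite /bGamma => k_eq eq23.
apply: (addrI ((a_num b c 3)%:Z * (a_num b c 3)%:Z)); rewrite [LHS]addrC [RHS]addrC eq23 k_eq; ring.
Qed.

Lemma shilla_p33 x y : dist e x y = 3%N ->
  (c 2)%:Z * (pnum e x y 3 3)%:Z + (1 + (a_num b c 3)%:Z) * (c 2)%:Z =
  (bGamma b c + (a_num b c 3)%:Z) * (b 2)%:Z.
Proof.
move=> dxy; have [+ _ +] := dist3_pnum_equations e_drg dxy.
move=> /(congr1 Posz) + /(congr1 Posz); rewrite !PoszD !PoszM => eq12 eq23.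
apply: p33_elimination eq12 eq23 (shilla_p23 dxy) _.
  by rewrite eqz_nat -lt0n (drg_c_gt0 e_drg).
by rewrite shilla_b1 shilla_c3; ring.
Qed.

Lemma shilla_p33_eq0 x y : dist e x y = 3%N ->
  ((bGamma b c + (a_num b c 3)%:Z) * (b 2)%:Z == (1 + (a_num b c 3)%:Z) * (c 2)%:Z) =
  (pnum e x y 3 3 == 0%N).
Proof.
move=> dxy; rewrite -(shilla_p33 dxy) -subr_eq0 addrK mulf_eq0 eqz_nat eqn0Ngt.
by rewrite (drg_c_gt0 e_drg) //= eqz_nat.
Qed.

Lemma shilla_sphere2_card x :
  (bGamma b c - 1) * bGamma b c * (a_num b c 3)%:Z * ((a_num b c 3)%:Z + 1) =
  (pnum e x x 2 2)%:Z * (c 2)%:Z.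
Proof.
have := sphere_card_rec e_drg x (isT : (1 < 3)%N).
rewrite (pnum_xx_dist1 e_drg) => /(congr1 Posz); rewrite !PoszM shilla_valency shilla_b1 => <-.
ring.
Qed.

End Shilla.

Theorem lemma10 (n : nat) (e : rel 'I_n) (b c : nat -> nat) :
  shilla e b c ->
  let bb : int := bGamma b c in
  let a3 : int := (a_num b c 3%N)%:Z in
  let b2 : int := (b 2%N)%:Z in
  let c2 : int := (c 2%N)%:Z in
  [/\ (c2 %| (bb - 1) * a3 * b2)%Z,
      (c2 %| (bb - 1) * bb * a3 * (a3 + 1))%Z,
      (c2 %| bb * (a3 + 1) * b2)%Z,
      [/\ (c2 %| (bb + a3) * b2)%Z,
          (1 + a3) * c2 <= (bb + a3) * b2 &
          ((bb + a3) * b2 = (1 + a3) * c2 <->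
             forall x y : 'I_n, dist e x y = 3%N -> pnum e x y 3%N 3%N = 0%N)]
    & (c2 %| (bb - 1) * bb * b2)%Z].
Proof.
move=> e_shilla bb a3 b2 c2.
have e_drg : distance_regular e 3 b c by case: e_shilla.
have [x [y dxy]] := drg_exists_dist e_drg (leqnn 3).
have p23E : c2 * (pnum e x y 2 3)%:Z = (bb - 1) * a3 * b2.
  by rewrite /c2 (shilla_p23 e_shilla dxy) (shilla_c3 e_shilla) /bb /a3 /b2; ring.
have p33E := shilla_p33 e_shilla dxy; rewrite -/bb -/a3 -/b2 -/c2 in p33E.
have dvd_i : (c2 %| (bb - 1) * a3 * b2)%Z.
  by apply/dvdzP; exists (pnum e x y 2 3)%:Z; rewrite -p23E mulrC.
have dvd_iv : (c2 %| (bb + a3) * b2)%Z.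
  by apply/dvdzP; exists ((pnum e x y 3 3)%:Z + 1 + a3); rewrite -p33E; ring.
split => //.
- by apply/dvdzP; exists (pnum e x x 2 2)%:Z; rewrite (shilla_sphere2_card e_shilla x).
- have -> : bb * (a3 + 1) * b2 = (bb + a3) * b2 + (bb - 1) * a3 * b2 by ring.
  exact: rpredD.
- split => //; first by rewrite -p33E lerDr mulr_ge0.
  split => [eq_iv u v duv | p33_0]; apply/eqP.
    by rewrite -(shilla_p33_eq0 e_shilla duv) eq_iv.
  by rewrite (shilla_p33_eq0 e_shilla dxy) p33_0.
- have -> : (bb - 1) * bb * b2 = (bb - 1) * ((bb + a3) * b2) - (bb - 1) * a3 * b2 by ring.
  by rewrite rpredB // dvdz_mull.
Qed.
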